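(* Let $k>0$ be real and let $M=\begin{bmatrix} k-1 & k-1 & k\\ 1&0&0\\ 0&1&0\end{bmatrix}$ (which is invertible). For every integer $n\ge1$, $$M^{-n}=\left(M^{-1}\right)^n=\left(M^n\right)^{-1}=\begin{bmatrix} J_{-(n-1)} & T_{-(n+1)} & kJ_{-n}\\ J_{-n} & T_{-(n+2)} & kJ_{-(n+1)}\\ J_{-(n+1)} & T_{-(n+3)} & kJ_{-(n+2)}\end{bmatrix},$$ where $T_{-m}=(k-1)J_{-(m-1)}+kJ_{-m}$ for every integer $m$.
   Context: For real $k>0$, the third-order $k$-Jacobsthal sequence $(J_n)=(J_n^{(3)}(k))$ is defined by $J_0=0$, $J_1=1$, $J_2=k-1$ and $J_{n+3}=(k-1)J_{n+2}+(k-1)J_{n+1}+kJ_n$, and extended to negative indices by the backward recurrence $J_{-n}=\frac{1-k}{k}J_{-(n-1)}+\frac{1-k}{k}J_{-(n-2)}+\frac{1}{k}J_{-(n-3)}$ for $n\ge1$. *)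

From HB Require Import structures.
From mathcomp Require Import all_boot all_order all_algebra.
From mathcomp Require Import reals.
Set Implicit Arguments. Unset Strict Implicit. Unset Printing Implicit Defensive.
Import Order.TTheory GRing.Theory Num.Theory.
Local Open Scope ring_scope.

(* (J_n, J_{n+1}, J_{n+2}) for n : nat, by the forward recurrence
   J_{n+3} = (k-1) J_{n+2} + (k-1) J_{n+1} + k J_n. *)
Fixpoint Jfwd {R : realType} (k : R) (n : nat) : R * R * R :=
  match n with
  | O => (0, 1, k - 1)
  | S m => let: (a, b, c) := Jfwd k m in
           (b, c, (k - 1) * c + (k - 1) * b + k * a)
  end.

(* (J_{-n}, J_{-n+1}, J_{-n+2}) for n : nat, by the backward recurrence
   J_{-n} = (1-k)/k J_{-(n-1)} + (1-k)/k J_{-(n-2)} + 1/k J_{-(n-3)}. *)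
Fixpoint Jbwd {R : realType} (k : R) (n : nat) : R * R * R :=
  match n with
  | O => (0, 1, k - 1)
  | S m => let: (a, b, c) := Jbwd k m in
           ((1 - k) / k * a + (1 - k) / k * b + 1 / k * c, a, b)
  end.

Definition J {R : realType} (k : R) (z : int) : R :=
  match z with
  | Posz n => (Jfwd k n).1.1
  | Negz n => (Jbwd k n.+1).1.1   (* Negz n = -(n+1) *)
  end.

Definition T {R : realType} (k : R) (z : int) : R :=
  (k - 1) * J k (z + 1) + k * J k z.

Definition mx3 {R : realType} (a b c d e f g h i : R) : 'M[R]_3 :=
  \matrix_(r < 3, s < 3)
    nth 0 (nth [::] [:: [:: a; b; c]; [:: d; e; f]; [:: g; h; i]] r) s.

Definition Mk {R : realType} (k : R) : 'M[R]_3 :=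
  mx3 (k - 1) (k - 1) k
      1 0 0
      0 1 0.

(** The inverse of [M] has rows [(0, 1, 0)], [(0, 0, 1)] and
    [(1/k, (1-k)/k, (1-k)/k)]; its last row is the backward recurrence of [J].
    Hence multiplying the proposed matrix [X_n] for [M^-n] by [M^-1] just
    shifts every index of [J] by one (after expanding [T] into [J]), i.e.
    [X_n M^-1 = X_(n+1)], and [X_1 = M^-1] gives [X_n = (M^-1)^n = (M^n)^-1]. *)

From mathcomp Require Import all_boot all_order all_algebra reals.
From mathcomp Require Import ring zify.
Import GRing.Theory Num.Theory.
Local Open Scope ring_scope.

Section Mx3.
Variable R : realType.

Lemma mx3_mul (a b c d e f g h i a' b' c' d' e' f' g' h' i' : R) :
  mx3 a b c d e f g h i *m mx3 a' b' c' d' e' f' g' h' i' =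
  mx3 (a * a' + b * d' + c * g') (a * b' + b * e' + c * h') (a * c' + b * f' + c * i')
      (d * a' + e * d' + f * g') (d * b' + e * e' + f * h') (d * c' + e * f' + f * i')
      (g * a' + h * d' + i * g') (g * b' + h * e' + i * h') (g * c' + h * f' + i * i').
Proof.
apply/matrixP => r s; rewrite !mxE !big_ord_recr big_ord0 /= !mxE add0r.
by case: r => [[|[|[|r]]] ?] //; case: s => [[|[|[|s]]] ?].
Qed.

Lemma mx3_id : 1%:M = mx3 1 0 0 0 1 0 0 0 (1 : R).
Proof.
apply/matrixP => r s; rewrite !mxE.
by case: r => [[|[|[|r]]] ?] //; case: s => [[|[|[|s]]] ?].
Qed.

End Mx3.

Section NegativeIndices.
Variables (R : realType) (k : R).

Lemma J_opp_nat m : J k (- m%:Z) = (Jbwd k m).1.1.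
Proof. by case: m => [|m] //; rewrite -NegzE. Qed.

Lemma J_oppS3 m :
  J k (- m.+3%:Z) =
  (1 - k) / k * J k (- m.+2%:Z) + (1 - k) / k * J k (- m.+1%:Z) + 1 / k * J k (- m%:Z).
Proof. by rewrite !J_opp_nat /=; case: (Jbwd k m) => [[a b] c]. Qed.

Lemma J0 : J k 0 = 0.
Proof. by []. Qed.

Lemma J_opp1 : J k (-1) = 0.
Proof. rewrite (J_opp_nat 1) /=; ring. Qed.

Lemma J_opp2 : J k (-2) = k^-1.
Proof. rewrite (J_opp_nat 2) /=; ring. Qed.

Lemma T_opp m : T k (- m.+1%:Z) = (k - 1) * J k (- m%:Z) + k * J k (- m.+1%:Z).
Proof. by rewrite /T; congr (_ * J k _ + _); lia. Qed.

End NegativeIndices.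

Section InversePowers.
Variables (R : realType) (k : R).
Hypothesis k_neq0 : k != 0.

Definition Mk_inv : 'M[R]_3 := mx3 0 1 0  0 0 1  k^-1 ((1 - k) / k) ((1 - k) / k).

Lemma Mk_mulmxV : Mk k *m Mk_inv = 1%:M.
Proof. by rewrite /Mk /Mk_inv mx3_mul mx3_id; congr mx3; field. Qed.

Lemma Mk_unit : Mk k \in unitmx.
Proof. by case: (mulmx1_unit Mk_mulmxV). Qed.

Lemma invMk : (Mk k)^-1 = Mk_inv.
Proof. by rewrite -[RHS](mulKr Mk_unit) -mulmxE Mk_mulmxV mulmx1. Qed.

(* [Mk_negpow m] is the claimed value of [M^-(m+1)]. *)
Definition Mk_negpow (m : nat) : 'M[R]_3 :=
  mx3 (J k (- m%:Z))    (T k (- m.+2%:Z)) (k * J k (- m.+1%:Z))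
      (J k (- m.+1%:Z)) (T k (- m.+3%:Z)) (k * J k (- m.+2%:Z))
      (J k (- m.+2%:Z)) (T k (- m.+4%:Z)) (k * J k (- m.+3%:Z)).

Lemma Mk_negpow0 : Mk_negpow 0 = Mk_inv.
Proof.
rewrite /Mk_negpow /Mk_inv !T_opp !J_oppS3 !oppr0 J0 J_opp1 J_opp2.
by congr mx3; field.
Qed.

Lemma Mk_negpowS m : Mk_negpow m *m Mk_inv = Mk_negpow m.+1.
Proof.
rewrite /Mk_negpow /Mk_inv mx3_mul !T_opp.
by congr mx3; rewrite ?J_oppS3; field.
Qed.

Lemma Mk_invX m : Mk_inv ^+ m.+1 = Mk_negpow m.
Proof.
elim: m => [|m IHm]; first by rewrite expr1 Mk_negpow0.
by rewrite exprSr IHm -Mk_negpowS mulmxE.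
Qed.

End InversePowers.

Theorem mainTheorem8 (R : realType) (k : R) (hk : 0 < k) :
  Mk k \in unitmx /\
  forall n : nat, (1 <= n)%N ->
    (Mk k)^-1 ^+ n = ((Mk k) ^+ n)^-1 /\
    ((Mk k) ^+ n)^-1 =
      mx3 (J k (- (n%:Z - 1))) (T k (- (n%:Z + 1))) (k * J k (- n%:Z))
          (J k (- n%:Z))       (T k (- (n%:Z + 2))) (k * J k (- (n%:Z + 1)))
          (J k (- (n%:Z + 1))) (T k (- (n%:Z + 3))) (k * J k (- (n%:Z + 2))).
Proof.
have k_neq0 : k != 0 := lt0r_neq0 hk.
split=> [|[|m] // _]; first exact: Mk_unit.
split; first by rewrite exprVn.
rewrite -exprVn invMk // Mk_invX // /Mk_negpow.
by congr mx3; try congr (k * J k _); try congr (J k _); try congr (T k _); lia.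
Qed.
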